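(* Let $\mathbb{K}$ be a field, $\theta=(\{X_t\}_{t\in G},\{h_t\}_{t\in G})$ a free partial action of a group $G$ on a set $X$, $R=\{(x,h_t(x)): t\in G,\ x\in X_{t^{-1}}\}$, and $\mathcal{F}_0(R)$ the algebra of finitely supported functions $R\to\mathbb{K}$ with pointwise linear operations and product $(f*g)(x,h_t(x))=\sum_{s\in G,\ x\in X_{s^{-1}}} f(x,h_s(x))\,g(h_s(x),h_t(x))$. If $I$ is a (two-sided) ideal of $\mathcal{F}_0(R)$, then there exists an $R$-invariant subset $Z\subseteq X$ such that $I=\mathcal{F}_0((Z\times Z)\cap R)$, the set of $f\in\mathcal{F}_0(R)$ vanishing outside $(Z\times Z)\cap R$.
   Context: A partial action of $G$ on a set $X$: subsets $X_t$, bijections $h_t:X_{t^{-1}}\to X_t$, $X_e=X$, $h_e=\mathrm{id}$, $h_t(X_{t^{-1}}\cap X_s)=X_t\cap X_{ts}$, $h_th_s=h_{ts}$ on $X_{s^{-1}}\cap X_{s^{-1}t^{-1}}$; free means $h_t(x)=x$ implies $t=e$. A subset $Z\subseteq X$ is $R$-invariant if whenever $(z,x)\in R$ with $z\in Z$, then $x\in Z$. *)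

From HB Require Import structures.
From mathcomp Require Import all_boot all_algebra.
From mathcomp Require Import boolp classical_sets cardinality fsbigop.
Set Implicit Arguments. Unset Strict Implicit. Unset Printing Implicit Defensive.
Import GRing.Theory.
Local Open Scope classical_set_scope.
Local Open Scope ring_scope.

Record is_group (G : Type) (mul : G -> G -> G) (e : G) (inv : G -> G) : Prop := {
  grp_assoc : forall a b c, mul a (mul b c) = mul (mul a b) c;
  grp_mul1 : forall a, mul e a = a;
  grp_mulg1 : forall a, mul a e = a;
  grp_mulV : forall a, mul (inv a) a = e;
  grp_mulgV : forall a, mul a (inv a) = e }.

(* D t is the subset X_t; h t is
   a function X -> X whose restriction to X_{t^-1} is the bijection
   h_t : X_{t^-1} -> X_t (values outside X_{t^-1} are irrelevant). *)
Record is_partial_action (G : Type) (mul : G -> G -> G) (e : G) (inv : G -> G)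
    (X : Type) (D : G -> set X) (h : G -> X -> X) : Prop := {
  pa_maps : forall t x, D (inv t) x -> D t (h t x);
  pa_inj : forall t x y, D (inv t) x -> D (inv t) y -> h t x = h t y -> x = y;
  pa_surj : forall t y, D t y -> exists2 x, D (inv t) x & h t x = y;
  pa_De : forall x, D e x;
  pa_he : forall x, h e x = x;
  pa_image : forall t s y,
      (D t y /\ D (mul t s) y) <->
      (exists x, [/\ D (inv t) x, D s x & h t x = y]);
  pa_comp : forall t s x, D (inv s) x -> D (mul (inv s) (inv t)) x ->
      h t (h s x) = h (mul t s) x }.

Definition pa_free (G : Type) (e : G) (inv : G -> G)
    (X : Type) (D : G -> set X) (h : G -> X -> X) : Prop :=
  forall t x, D (inv t) x -> h t x = x -> t = e.

Definition orbrel (G : Type) (inv : G -> G) (X : Type)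
    (D : G -> set X) (h : G -> X -> X) (x y : X) : Prop :=
  exists2 t, D (inv t) x & h t x = y.

(* A function R -> K is represented as f : X -> X -> K vanishing off R.
   F_0(R): finitely supported functions on R. *)
Definition F0 (K : fieldType) (X : Type) (R : X -> X -> Prop)
    (f : X -> X -> K) : Prop :=
  (forall x y, f x y != 0 -> R x y) /\
  finite_set [set p : X * X | f p.1 p.2 != 0].

Definition gsum (K : fieldType) (I : Type) (A : set I) (F : I -> K) : K :=
  \sum_(i \in (A : set {classic I})) F i.

Definition conv (K : fieldType) (G : Type) (inv : G -> G) (X : Type)
    (D : G -> set X) (h : G -> X -> X) (f g : X -> X -> K) : X -> X -> K :=
  fun x z =>
    if pselect (orbrel inv D h x z) then
      gsum [set s : G | D (inv s) x] (fun s => f x (h s x) * g (h s x) z)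
    else 0.

Definition is_ideal (K : fieldType) (G : Type) (inv : G -> G) (X : Type)
    (D : G -> set X) (h : G -> X -> X) (I : set (X -> X -> K)) : Prop :=
  [/\ forall f, I f -> F0 (orbrel inv D h) f,
      I (fun _ _ => 0),
      forall f g, I f -> I g -> I (fun x y => f x y + g x y),
      forall f, I f -> I (fun x y => - f x y) &
      forall f g, F0 (orbrel inv D h) f -> I g ->
        I (conv inv D h f g) /\ I (conv inv D h g f)].

Definition R_invariant (X : Type) (R : X -> X -> Prop) (Z : set X) : Prop :=
  forall z x, Z z -> R z x -> Z x.

(** The functions [delta_fun c x y], equal to [c] at the single point [(x, y)]
   of [R], behave like matrix units: by freeness the sum defining a
   convolution with one of them has at most one nonzero term, so
   [delta a x x' * f * delta b y' y = delta (a f(x', y') b) x y].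
   Hence an ideal containing [f] with [f(x, y) <> 0] contains [delta 1 x x]
   and [delta 1 y y], and an ideal containing [delta 1 x x] contains every
   [delta c x y] with [(x, y)] in [R].  The set [Z] of points [x] with
   [delta 1 x x] in the ideal is therefore [R]-invariant, and an ideal, being
   closed under finite sums, is determined by which [delta c x y] it
   contains. *)

From HB Require Import structures.
From mathcomp Require Import all_boot all_algebra.
From mathcomp Require Import boolp classical_sets cardinality fsbigop.
Set Implicit Arguments. Unset Strict Implicit. Unset Printing Implicit Defensive.
Import GRing.Theory.
Local Open Scope classical_set_scope.
Local Open Scope ring_scope.

Section Group.
Variables (G : Type) (mul : G -> G -> G) (e : G) (inv : G -> G).
Hypothesis grp : is_group mul e inv.

Lemma invgK a : inv (inv a) = a.
Proof.
by rewrite -[LHS](grp_mulg1 grp) -(grp_mulV grp a) (grp_assoc grp)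
  (grp_mulV grp) (grp_mul1 grp).
Qed.

Lemma invMg a b : inv (mul a b) = mul (inv b) (inv a).
Proof.
have mulgV_ab : mul (mul a b) (mul (inv b) (inv a)) = e.
  by rewrite -(grp_assoc grp) (grp_assoc grp b) (grp_mulgV grp) (grp_mul1 grp)
    (grp_mulgV grp).
by rewrite -[LHS](grp_mulg1 grp) -mulgV_ab (grp_assoc grp) (grp_mulV grp)
  (grp_mul1 grp).
Qed.

Lemma invg1 : inv e = e.
Proof. by rewrite -[LHS](grp_mul1 grp) (grp_mulgV grp). Qed.

Lemma mulVg_eq1 a b : mul (inv a) b = e -> b = a.
Proof.
move=> Vab; rewrite -[b](grp_mul1 grp) -(grp_mulgV grp a) -(grp_assoc grp).
by rewrite Vab (grp_mulg1 grp).
Qed.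

End Group.

Section PartialAction.
Variables (G : Type) (mul : G -> G -> G) (e : G) (inv : G -> G).
Variables (X : Type) (D : G -> set X) (h : G -> X -> X).
Hypothesis grp : is_group mul e inv.
Hypothesis pa : is_partial_action mul e inv D h.
Local Notation R := (orbrel inv D h).

Lemma pa_hK t x : D (inv t) x -> h (inv t) (h t x) = x.
Proof.
move=> Dx; rewrite (pa_comp pa) // ?(grp_mulV grp) ?(pa_he pa) //.
by rewrite (invgK grp) (grp_mulV grp); apply: (pa_De pa).
Qed.

Lemma pa_D_mul t s x : D (inv t) x -> D s (h t x) -> D (mul (inv t) s) x.
Proof.
move=> Dx Ds; have [] // := (pa_image pa (inv t) s x).2.
by exists (h t x); split; rewrite ?pa_hK ?(invgK grp) //; apply: (pa_maps pa).
Qed.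

Lemma orbrel_refl x : R x x.
Proof. by exists e; rewrite ?(invg1 grp) ?(pa_he pa) //; apply: (pa_De pa). Qed.

Lemma orbrel_sym x y : R x y -> R y x.
Proof.
case=> t Dx <-; exists (inv t); last exact: pa_hK.
by rewrite (invgK grp); apply: (pa_maps pa).
Qed.

Lemma orbrel_trans x y z : R x y -> R y z -> R x z.
Proof.
case=> t Dx <- [s Dy <-]; have Dts := pa_D_mul Dx Dy.
by exists (mul s t); rewrite ?(invMg grp) ?(pa_comp pa).
Qed.

Hypothesis free : pa_free e inv D h.

Lemma pa_free_inj s s' x :
  D (inv s) x -> D (inv s') x -> h s x = h s' x -> s = s'.
Proof.
move=> Ds Ds' hss'.
have Dss' : D (mul (inv s) s') x.
  by apply: pa_D_mul => //; rewrite hss'; apply: (pa_maps pa).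
have hVs : h (mul (inv s') s) x = x.
  by rewrite -(pa_comp pa) ?(invgK grp) // hss' pa_hK.
apply: (mulVg_eq1 grp); apply: (free (x := x)) => //.
by rewrite (invMg grp) (invgK grp).
Qed.

End PartialAction.

Section FiniteSums.
Variables (K : fieldType) (I : Type).

Lemma gsum_eq0 (A : set I) (F : I -> K) :
  (forall i, A i -> F i = 0) -> gsum A F = 0.
Proof. by move=> F0; rewrite /gsum fsbig1. Qed.

Lemma gsum_eq_single (A : set I) (F : I -> K) i0 :
  A i0 -> (forall i, A i -> i <> i0 -> F i = 0) -> gsum A F = F i0.
Proof.
move=> Ai0 F0; rewrite /gsum.
rewrite -(fsbig_widen ([set i0] : set {classic I})) ?fsbig_set1 //.
- by move=> i /= ->.
- by move=> i [Ai /= ?]; apply: F0.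
Qed.

End FiniteSums.

Section DeltaFunctions.
Variables (K : fieldType) (X : Type).

Definition delta_fun (c : K) (x y : X) : X -> X -> K :=
  fun a b => if pselect (a = x /\ b = y) then c else 0.

Definition vanishes_off (R : X -> X -> Prop) (f : X -> X -> K) : Prop :=
  forall a b, f a b != 0 -> R a b.

Lemma delta_fun_id c x y : delta_fun c x y x y = c.
Proof. by rewrite /delta_fun; case: pselect => // -[]. Qed.

Lemma delta_fun_neq c x y a b : ~ (a = x /\ b = y) -> delta_fun c x y a b = 0.
Proof. by rewrite /delta_fun; case: pselect. Qed.

Lemma delta_fun_if c x y a b : delta_fun c x y a b =
  if pselect (a = x) then (if pselect (b = y) then c else 0) else 0.
Proof.
rewrite /delta_fun.
case: (pselect (a = x)) => ax; case: (pselect (b = y)) => yb; case: pselect => pab //=.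
all: exfalso; tauto.
Qed.

Lemma delta_fun0 x y : delta_fun 0 x y = fun _ _ => 0.
Proof. by apply/funext => a; apply/funext => b; rewrite /delta_fun; case: pselect. Qed.

Lemma delta_fun_supp c x y a b : delta_fun c x y a b != 0 -> a = x /\ b = y.
Proof. by rewrite /delta_fun; case: pselect => // _ /eqP. Qed.

Lemma F0_delta_fun (R : X -> X -> Prop) c x y : R x y -> F0 R (delta_fun c x y).
Proof.
move=> Rxy; split; first by move=> a b /delta_fun_supp [-> ->].
apply: (sub_finite_set _ (finite_set1 (x, y))).
by move=> [a b] /= /delta_fun_supp [-> ->].
Qed.

Lemma add_closed_finsupp (J : set (X -> X -> K)) :
  J (fun _ _ => 0) -> (forall f g, J f -> J g -> J (fun a b => f a b + g a b)) ->
  forall f, finite_set [set p : X * X | f p.1 p.2 != 0] ->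
  (forall x y, f x y != 0 -> J (delta_fun (f x y) x y)) -> J f.
Proof.
move=> J0 JD f fin_f.
have [s supp_f] : exists s : seq {classic (X * X)},
    [set p : {classic (X * X)} | f p.1 p.2 != 0] = [set` s].
  exact/finite_seqP.
have {supp_f fin_f} : forall a b, f a b != 0 -> ((a, b) : {classic (X * X)}) \in s.
  by move=> a b fab; have : [set` s] ((a, b) : {classic (X * X)}) by rewrite -supp_f.
elim: s f => [|[x y] s IHs] f supp_f Jdelta.
  suff -> : f = fun _ _ => 0 by [].
  apply/funext => a; apply/funext => b; apply/eqP/negP => /negP /supp_f.
  by rewrite in_nil.
pose g a b := f a b - delta_fun (f x y) x y a b.
have g_off a b : g a b != 0 -> ~ (a = x /\ b = y) /\ g a b = f a b.
  rewrite /g; case: (pselect (a = x /\ b = y)) => [[-> ->]|nab].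
    by rewrite delta_fun_id subrr eqxx.
  by rewrite delta_fun_neq // subr0.
have Jg : J g.
  apply: IHs => [a b /[dup] /g_off [nab ->] /supp_f|a b /[dup] /g_off [_ ->] /Jdelta //].
  by rewrite in_cons => /orP [/eqP [ax bx]|//]; case: nab.
have Jfxy : J (delta_fun (f x y) x y).
  by have [->|/Jdelta //] := eqVneq (f x y) 0; rewrite delta_fun0.
suff -> : f = fun a b => g a b + delta_fun (f x y) x y a b by apply: JD.
by apply/funext => a; apply/funext => b; rewrite subrK.
Qed.

End DeltaFunctions.

Section Convolution.
Variables (K : fieldType) (G : Type) (mul : G -> G -> G) (e : G) (inv : G -> G).
Variables (X : Type) (D : G -> set X) (h : G -> X -> X).
Hypothesis grp : is_group mul e inv.
Hypothesis pa : is_partial_action mul e inv D h.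
Hypothesis free : pa_free e inv D h.
Local Notation R := (orbrel inv D h).
Local Notation conv := (conv inv D h).

Lemma conv_delta_funr (f : X -> X -> K) c y z : vanishes_off R f -> R y z ->
  conv f (delta_fun c y z) = fun a b => if pselect (b = z) then f a y * c else 0.
Proof.
move=> f_off Ryz; apply/funext => a; apply/funext => b; rewrite /conv.
case: pselect => Rab; case: pselect => [bz|nbz].
- subst b; have [fay|fay] := eqVneq (f a y) 0.
    rewrite fay mul0r; apply: gsum_eq0 => s _.
    have [->|nhy] := pselect (h s a = y); first by rewrite fay mul0r.
    by rewrite delta_fun_neq ?mulr0 // => -[].
  have [t Dt ht] := f_off _ _ fay.
  rewrite (gsum_eq_single (i0 := t)) // ?ht ?delta_fun_id // => s Ds nst.
  rewrite delta_fun_neq ?mulr0 // => -[hs _]; apply: nst.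
  by apply: (pa_free_inj grp pa free Ds Dt); rewrite hs ht.
- by apply: gsum_eq0 => s _; rewrite delta_fun_neq ?mulr0 // => -[].
- subst b; have [->|fay] := eqVneq (f a y) 0; first by rewrite mul0r.
  by exfalso; apply: Rab; exact: (orbrel_trans grp pa (f_off _ _ fay) Ryz).
- by [].
Qed.

Lemma conv_delta_funl (f : X -> X -> K) c x y : vanishes_off R f -> R x y ->
  conv (delta_fun c x y) f = fun a b => if pselect (a = x) then c * f y b else 0.
Proof.
move=> f_off Rxy; apply/funext => a; apply/funext => b; rewrite /conv.
case: pselect => Rab; case: pselect => [ax|nax].
- subst a; have [t Dt ht] := Rxy.
  rewrite (gsum_eq_single (i0 := t)) // ?ht ?delta_fun_id // => s Ds nst.
  rewrite delta_fun_neq ?mul0r // => -[_ hs]; apply: nst.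
  by apply: (pa_free_inj grp pa free Ds Dt); rewrite hs ht.
- by apply: gsum_eq0 => s _; rewrite delta_fun_neq ?mul0r // => -[].
- subst a; have [->|fyb] := eqVneq (f y b) 0; first by rewrite mulr0.
  by exfalso; apply: Rab; exact: (orbrel_trans grp pa Rxy (f_off _ _ fyb)).
- by [].
Qed.

Lemma conv_delta_fun_sandwich (f : X -> X -> K) a b x x' y' y :
  vanishes_off R f -> R x x' -> R y' y ->
  conv (delta_fun a x x') (conv f (delta_fun b y' y)) =
  delta_fun (a * f x' y' * b) x y.
Proof.
move=> f_off Rxx' Ry'y; rewrite conv_delta_funr // conv_delta_funl //; last first.
  move=> u v /=; case: (pselect (v = y)) => [vy|nvy]; last by rewrite /= eqxx.
  move=> /= fuy'; rewrite vy.
  have fuy'_neq0 : f u y' != 0 by apply: contraNneq fuy' => ->; rewrite mul0r.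
  exact: (orbrel_trans grp pa (f_off _ _ fuy'_neq0) Ry'y).
apply/funext => u; apply/funext => v; rewrite delta_fun_if.
by case: (pselect (u = x)) => ux; case: (pselect (v = y)) => vy; rewrite ?mulrA ?mulr0.
Qed.

Variable I : set (X -> X -> K).
Hypothesis ideal : is_ideal inv D h I.

Lemma ideal_vanishes_off f : I f -> vanishes_off R f.
Proof. by case: ideal => F0I _ _ _ _ /F0I []. Qed.

Lemma ideal_delta_fun_sandwich f a b x x' y' y :
  I f -> R x x' -> R y' y -> I (delta_fun (a * f x' y' * b) x y).
Proof.
case: ideal => _ _ _ _ convI If Rxx' Ry'y.
rewrite -conv_delta_fun_sandwich //; last exact: ideal_vanishes_off.
have Ifb := (convI _ _ (F0_delta_fun b Ry'y) If).2.
exact: (convI _ _ (F0_delta_fun a Rxx') Ifb).1.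
Qed.

End Convolution.

Theorem mainTheorem13 (K : fieldType) (G : Type) (mul : G -> G -> G) (e : G)
    (inv : G -> G) (X : Type) (D : G -> set X) (h : G -> X -> X)
    (I : set (X -> X -> K)) :
  is_group mul e inv ->
  is_partial_action mul e inv D h ->
  pa_free e inv D h ->
  is_ideal inv D h I ->
  exists Z : set X,
    R_invariant (orbrel inv D h) Z /\
    (forall f : X -> X -> K,
       I f <-> (F0 (orbrel inv D h) f /\
                (forall x y, f x y != 0 -> Z x /\ Z y))).
Proof.
move=> grp pa free ideal.
have sandwich := ideal_delta_fun_sandwich grp pa free ideal.
have [refl sym] := (orbrel_refl grp pa, orbrel_sym grp pa).
exists (fun x => I (delta_fun 1 x x)); split.
  move=> z x Zz Rzx /=.
  by have := sandwich _ 1 1 _ _ _ _ Zz (sym _ _ Rzx) Rzx; rewrite delta_fun_id !mul1r.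
move=> f; split=> [If|[[f_off fin_f] Zf]].
  case: (ideal) => F0I _ _ _ _; split=> [|x y fxy]; first exact: F0I.
  have Ryx := sym _ _ (ideal_vanishes_off ideal If fxy).
  have unit_fxy : (f x y)^-1 * f x y * 1 = 1 by rewrite mulr1 mulVf.
  by rewrite /= -[X in delta_fun X]unit_fxy; split; apply: sandwich.
case: ideal => _ I0 ID _ _; apply: add_closed_finsupp => // x y fxy.
have [Zx _] := Zf _ _ fxy.
by have := sandwich _ 1 (f x y) _ _ _ _ Zx (refl x) (f_off _ _ fxy);
  rewrite delta_fun_id !mul1r.
Qed.
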